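(* Let $K$ be an $n$-globular operad equipped with a contraction $\gamma$, and let $X$ be an $n$-globular set. In the free $K$-algebra on $X$, $\mu^K_X\colon K^2X\to KX$, every diagram of constraint $n$-cells commutes: any two parallel constraint $n$-cells of this algebra are equal.
   Context: Fix $n\in\mathbb{N}$. An $n$-globular set $X$ consists of sets $X_0,\dots,X_n$ and functions $s,t\colon X_m\to X_{m-1}$ ($1\le m\le n$) with $s\circ s=s\circ t$ and $t\circ s=t\circ t$; maps commute with $s,t$; $\mathbf{GSet}_n$ is the resulting category. Two $m$-cells are parallel if they have the same source and target. $T$ denotes the free strict $n$-category monad on $\mathbf{GSet}_n$, with unit $\eta^T$ and multiplication $\mu^T$. $1$ denotes the terminal $n$-globular set and $!$ any map to $1$; $T1$ is the free strict $n$-category on $1$; $\mathrm{id}_\alpha$ is the identity cell on $\alpha$. An $n$-globular collection is a map $k\colon K\to T1$ in $\mathbf{GSet}_n$. The tensor $K\otimes K'$ of collections $k\colon K\to T1$, $k'\colon K'\to T1$ is the pullback of $k$ along $T!\colon TK'\to T1$, regarded as a collection via $K\otimes K'\to TK'\xrightarrow{Tk'}T^21\xrightarrow{\mu^T_1}T1$; the unit is $\eta^T_1$. An $n$-globular operad is a monoid $(K,\eta^K,\mu^K)$ in this monoidal category. It induces a monad on $\mathbf{GSet}_n$, also denoted $(K,\eta^K,\mu^K)$: $KA$ is the pullback of $k\colon K\to T1$ and $T!\colon TA\to T1$, so its $m$-cells are pairs $(\tau,c)$ with $\tau\in(TA)_m$, $c\in K_m$, $T!(\tau)=k(c)$; the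 unit and multiplication are induced from those of the operad and of $T$. The free $K$-algebra on $X$ is $\mu^K_X\colon K(KX)\to KX$. Contractions: for $x\in(T1)_m$ put $K(x)=\{a\in K_m: k(a)=x\}$. For $1\le m\le n$ and $\pi\in(T1)_m$ let $C_K(\pi)=K(s\pi)\times K(t\pi)$ if $m=1$, and $C_K(\pi)=\{(a,b)\in K(s\pi)\times K(t\pi): s(a)=s(b),\ t(a)=t(b)\}$ if $m>1$. A contraction $\gamma$ on $K$ consists of, for each $1\le m\le n$ and each $\alpha\in(T1)_{m-1}$, a function $\gamma_{\mathrm{id}_\alpha}\colon C_K(\mathrm{id}_\alpha)\to K(\mathrm{id}_\alpha)$ with $s\gamma_{\mathrm{id}_\alpha}(a,b)=a$ and $t\gamma_{\mathrm{id}_\alpha}(a,b)=b$, such that moreover (tameness) any two parallel $n$-cells $a,b$ of $K$ with $k(a)=k(b)$ are equal. Constraint cells: for a $K$-algebra $\theta\colon KA\to A$ and $1\le m\le n$, an $m$-cell of $A$ is a constraint $m$-cell if it equals $\theta(\mathrm{id}_\pi,\gamma_{\mathrm{id}_{T!(\pi)}}(p,q))$ for some $\pi\in(TA)_{m-1}$ and some $(p,q)\in C_K(\mathrm{id}_{T!(\pi)})$ (note $(\mathrm{id}_\pi,\gamma_{\mathrm{id}_{T!(\pi)}}(p,q))$ is an $m$-cell of $KA$). For the free algebra, $A=KX$ and $\theta=\mu^K_X$. *)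

From Stdlib Require Import ProofIrrelevance.
From Stdlib Require List.
From mathcomp Require Import all_boot.
Set Implicit Arguments. Unset Strict Implicit. Unset Printing Implicit Defensive.

Lemma sig_eq (T : Type) (P : T -> Prop) (a b : {x | P x}) :
  sval a = sval b -> a = b.
Proof. case: a => a Ha; case: b => b Hb /= e; subst b; f_equal; apply: proof_irrelevance. Qed.

Record gset (n : nat) := GSet {
  cell : nat -> Type;
  src : forall m, m < n -> cell m.+1 -> cell m;
  tgt : forall m, m < n -> cell m.+1 -> cell m;
  src_src : forall m (H1 : m.+1 < n) (H2 : m < n) (x : cell m.+2),
      src H2 (src H1 x) = src H2 (tgt H1 x);
  tgt_src : forall m (H1 : m.+1 < n) (H2 : m < n) (x : cell m.+2),
      tgt H2 (src H1 x) = tgt H2 (tgt H1 x) }.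

Record gmap (n : nat) (A B : gset n) := GMap {
  gfun : forall m, cell A m -> cell B m;
  gfun_src : forall m (H : m < n) (x : cell A m.+1), gfun (src H x) = src H (gfun x);
  gfun_tgt : forall m (H : m < n) (x : cell A m.+1), gfun (tgt H x) = tgt H (gfun x) }.

Inductive raw (L : Type) : Type := Raw : L -> seq (raw L * L) -> raw L.
Arguments Raw {L}.

Section RawInd.
Variables (L : Type) (P : raw L -> Prop).
Hypothesis IH : forall x l, (forall p, List.In p l -> P p.1) -> P (Raw x l).
Fixpoint raw_ind' (r : raw L) : P r :=
  match r with
  | Raw x l => IH x ((fix go (l : seq (raw L * L)) : forall p, List.In p l -> P p.1 :=
      match l with
      | [::] => fun p H => False_ind _ H
      | q :: l' => fun p H => match H with
                  | or_introl e => eq_ind q (fun p => P p.1) (raw_ind' q.1) p e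
                  | or_intror H' => go l' p H' end
      end) l)
  end.
End RawInd.

Section RawOps.
Variable L : Type.
Fixpoint srcR (k : nat) (r : raw L) : raw L :=
  match r with
  | Raw x l => match k with
    | 0 => Raw x [::]
    | k'.+1 => Raw x (map (fun p => (srcR k' p.1, p.2)) l) end end.
Fixpoint tgtR (k : nat) (r : raw L) : raw L :=
  match r with
  | Raw x l => match k with
    | 0 => Raw (last x (map snd l)) [::]
    | k'.+1 => Raw x (map (fun p => (tgtR k' p.1, p.2)) l) end end.

Fixpoint chainP (W : L -> L -> raw L -> Prop) (Y : L -> Prop) (prev : L)
   (l : seq (raw L * L)) : Prop :=
  match l with
  | [::] => True
  | (s, y) :: l' => Y y /\ W prev y s /\ chainP W Y y l' end.

Variable Lok : nat -> option (L * L) -> L -> Prop.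
Fixpoint wf (d m : nat) (b : option (L * L)) (r : raw L) : Prop :=
  match r with
  | Raw x l => Lok d b x /\ (m = 0 -> l = [::]) /\
      chainP (fun p y s => wf d.+1 m.-1 (Some (p, y)) s) (Lok d b) x l
  end.
End RawOps.

Fixpoint mapR (L L' : Type) (f : L -> L') (r : raw L) : raw L' :=
  match r with Raw x l => Raw (f x) (map (fun p => (mapR f p.1, f p.2)) l) end.

Section RawLemmas.

Lemma chainP_gen (L L' : Type) W Y W' Y' (g : raw L -> raw L') (f : L -> L') p l :
  (forall s y pr, List.In (s, y) l -> W pr y s -> W' (f pr) (f y) (g s)) ->
  (forall y, Y y -> Y' (f y)) ->
  chainP W Y p l -> chainP W' Y' (f p) (map (fun q => (g q.1, f q.2)) l).
Proof.
elim: l p => [|[s y] l IH] p //= HW HY [Hy [Hs Hc]]; split; first exact: HY.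
split; first by apply: HW => //; left.
by apply: IH => // s' y' pr Hin; apply: HW; right.
Qed.

Lemma chainP_weak (L : Type) W Y W' p (l : seq (raw L * L)) :
  (forall s y pr, List.In (s, y) l -> W pr y s -> W' pr y s) ->
  chainP W Y p l -> chainP W' Y p l.
Proof.
elim: l p => [|[s y] l IH] p //= HW [Hy [Hs Hc]]; split => //.
split; first by apply: HW => //; left.
by apply: IH => // s' y' pr Hin; apply: HW; right.
Qed.

Lemma chainP_last (L : Type) W (Y : L -> Prop) p (l : seq (raw L * L)) :
  Y p -> chainP W Y p l -> Y (last p (map snd l)).
Proof. by elim: l p => [|[s y] l IH] p //= Hp [Hy [_ Hc]]; apply: IH. Qed.

Variables (L : Type) (Lok : nat -> option (L * L) -> L -> Prop).

Lemma srcR_wf (r : raw L) : forall d m b, wf Lok d m.+1 b r -> wf Lok d m b (srcR m r).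
Proof.
elim/raw_ind': r => x l IH d [|m] b /= [Hx [_ Hc]]; first by [].
split=> //; split=> //.
apply: (chainP_gen (W := fun p y s => wf Lok d.+1 m.+1 (Some (p, y)) s) (Y := Lok d b)
   (f := id)) Hc => // s y pr Hin Hw.
by apply: (IH (s, y)).

Qed.

Lemma tgtR_wf (r : raw L) : forall d m b, wf Lok d m.+1 b r -> wf Lok d m b (tgtR m r).
Proof.
elim/raw_ind': r => x l IH d [|m] b /= [Hx [_ Hc]].
  by split=> //; exact: chainP_last Hx Hc.
split=> //; split=> //.
apply: (chainP_gen (W := fun p y s => wf Lok d.+1 m.+1 (Some (p, y)) s) (Y := Lok d b)
   (f := id)) Hc => // s y pr Hin Hw.
by apply: (IH (s, y)).
Qed.

Lemma wf_S (r : raw L) : forall d m b, wf Lok d m b r -> wf Lok d m.+1 b r.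
Proof.
elim/raw_ind': r => x l IH d [|m] b /= [Hx [Hl Hc]].
  by rewrite Hl //.
split=> //; split=> //; apply: chainP_weak Hc => s y pr Hin.
exact: (IH (s, y)).
Qed.

Lemma srcR_srcR (k : nat) (r : raw L) : srcR k (srcR k.+1 r) = srcR k (tgtR k.+1 r).
Proof.
elim: k r => [|k IH] [x l] //=; rewrite -!map_comp; congr Raw; apply: eq_map => q /=.
by rewrite IH.
Qed.

Lemma tgtR_srcR (k : nat) (r : raw L) : tgtR k (srcR k.+1 r) = tgtR k (tgtR k.+1 r).
Proof.
elim: k r => [|k IH] [x l] /=; first by rewrite -!map_comp.
rewrite -!map_comp; congr Raw; apply: eq_map => q /=.
by rewrite IH.
Qed.

End RawLemmas.

Lemma srcR_map (L L' : Type) (f : L -> L') k (r : raw L) :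
  mapR f (srcR k r) = srcR k (mapR f r).
Proof.
elim: k r => [|k IH] [x l] //=; rewrite -!map_comp; congr Raw; apply: eq_map => q /=.
by rewrite IH.
Qed.

Lemma tgtR_map (L L' : Type) (f : L -> L') k (r : raw L) :
  mapR f (tgtR k r) = tgtR k (mapR f r).
Proof.
elim: k r => [|k IH] [x l] /=.
  have -> : map snd (map (fun p => (mapR f p.1, f p.2)) l) = map f (map snd l).
    by rewrite -!map_comp.
  by rewrite last_map.
rewrite -!map_comp; congr Raw; apply: eq_map => q /=.
by rewrite IH.
Qed.

Lemma wf_map (L L' : Type) (Lok : nat -> option (L * L) -> L -> Prop)
   (Lok' : nat -> option (L' * L') -> L' -> Prop) (f : L -> L') :
  (forall d b x, Lok d b x -> Lok' d (omap (fun p => (f p.1, f p.2)) b) (f x)) ->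
  forall r d m b, wf Lok d m b r -> wf Lok' d m (omap (fun p => (f p.1, f p.2)) b) (mapR f r).
Proof.
move=> Hf; elim/raw_ind' => x l IH d m b /= [Hx [Hl Hc]].
split; first exact: Hf.
split; first by move=> /Hl ->.
apply: (chainP_gen (W := fun p y s => wf Lok d.+1 m.-1 (Some (p, y)) s)) Hc.
  by move=> s y pr Hin Hw; apply: (IH (s, y)) Hw.
by move=> y; apply: Hf.
Qed.

Section Globular.
Variable n : nat.

Definition one : gset n :=
  @GSet n (fun _ => unit) (fun _ _ _ => tt) (fun _ _ _ => tt)
     (fun _ _ _ _ => erefl) (fun _ _ _ _ => erefl).

Definition lab (A : gset n) := {j : nat & cell A j}.

Definition lbound (A : gset n) (x a b : lab A) : Prop :=
  match x with
  | existT 0 _ => False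
  | existT j.+1 c => exists H : j < n,
      a = existT _ j (src H c) /\ b = existT _ j (tgt H c)
  end.

Definition LokA (A : gset n) (d : nat) (bnd : option (lab A * lab A)) (x : lab A) : Prop :=
  projT1 x = d /\ match bnd with None => True | Some (a, b) => lbound x a b end.

Definition Tcell (A : gset n) (m : nat) := {r : raw (lab A) | wf (@LokA A) 0 m None r}.

Definition Tsrc (A : gset n) m (H : m < n) (x : Tcell A m.+1) : Tcell A m :=
  exist _ (srcR m (sval x)) (srcR_wf (proj2_sig x)).
Definition Ttgt (A : gset n) m (H : m < n) (x : Tcell A m.+1) : Tcell A m :=
  exist _ (tgtR m (sval x)) (tgtR_wf (proj2_sig x)).

Definition Tg (A : gset n) : gset n.
Proof.
refine (@GSet n (Tcell A) (@Tsrc A) (@Ttgt A) _ _) => m H1 H2 x; apply: sig_eq => /=.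
  exact: srcR_srcR.
exact: tgtR_srcR.
Defined.

Definition bangL (A : gset n) (x : lab A) : lab one := existT _ (projT1 x) tt.

Lemma bangL_ok (A : gset n) d b x : LokA d b x ->
  @LokA one d (omap (fun p => (@bangL A p.1, @bangL A p.2)) b) (@bangL A x).
Proof.
case: x => j c [/= Hd Hb]; split => //; case: b Hb => [[a b']|] //=.
by case: j c {Hd} => [|j] c //= [H [-> ->]]; exists H.
Qed.

Definition Tbang_fun (A : gset n) m (x : Tcell A m) : Tcell one m :=
  exist _ (mapR (@bangL A) (sval x)) (wf_map (@bangL_ok A) (proj2_sig x)).

Definition Tbang (A : gset n) : gmap (Tg A) (Tg one).
Proof.
refine (@GMap n (Tg A) (Tg one) (@Tbang_fun A) _ _) => m H x; apply: sig_eq => /=.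
  exact: srcR_map.
exact: tgtR_map.
Defined.

Section Pullback.
Variables (A B C : gset n) (f : gmap A C) (g : gmap B C).
Definition pbcell m := {p : cell A m * cell B m | gfun f p.1 = gfun g p.2}.
Definition pbsrc m (H : m < n) (p : pbcell m.+1) : pbcell m.
Proof.
exists (src H (sval p).1, src H (sval p).2) => /=.
by rewrite !gfun_src (proj2_sig p).
Defined.
Definition pbtgt m (H : m < n) (p : pbcell m.+1) : pbcell m.
Proof.
exists (tgt H (sval p).1, tgt H (sval p).2) => /=.
by rewrite !gfun_tgt (proj2_sig p).
Defined.
Definition pb : gset n.
Proof.
refine (@GSet n pbcell pbsrc pbtgt _ _) => m H1 H2 x; apply: sig_eq => /=.
  by rewrite src_src [src H2 (src H1 _)]src_src.
by rewrite tgt_src [tgt H2 (src H1 _)]tgt_src.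
Defined.
End Pullback.

End Globular.

Arguments gfun {n A B} g {m} x.
Arguments src {n} g {m} H x.
Arguments tgt {n} g {m} H x.

(* Unit of T at the raw level: the pasting diagram consisting of one cell. *)
Fixpoint etaR (L : Type) (sN tN : nat -> L -> L) (k : nat) (x : L) : raw L :=
  match k with
  | 0 => Raw x [::]
  | k'.+1 => Raw (sN k x) [:: (etaR sN tN k' x, tN k x)]
  end.

(* Multiplication of T at the raw level: flattening a pasting diagram of pasting diagrams. *)
Definition rhead (L : Type) (r : raw L) : L := match r with Raw x _ => x end.
Definition rlist (L : Type) (r : raw L) : seq (raw L * L) := match r with Raw _ l => l end.
Definition nthc (L : Type) (j : nat) (Y : raw L) : raw L :=
  nth (Raw (rhead Y) [::]) (map fst (rlist Y)) j.
Fixpoint projR (L : Type) (j : nat) (s : raw (raw L)) : raw (raw L) :=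
  match s with Raw Y l => Raw (nthc j Y) (map (fun p => (projR j p.1, nthc j p.2)) l) end.
Fixpoint flatR (L : Type) (m : nat) (S : raw (raw L)) : raw L :=
  match m with
  | 0 => Raw (rhead (rhead S)) [::]
  | m'.+1 => Raw (rhead (rhead S))
      (flatten (map (fun p => let Y := rhead p.1 in
          map (fun j => (flatR m' (projR j p.1), nth (rhead Y) (map snd (rlist Y)) j))
              (iota 0 (size (rlist Y)))) (rlist S)))
  end.

Section Operads.
Variable n : nat.

Definition lsrc1 (A : gset n) (x : lab A) : lab A :=
  match x with
  | existT 0 c => existT _ 0 c
  | existT j.+1 c =>
    (match j < n as b return (j < n) = b -> lab A with
     | true => fun H => existT _ j (src A H c)
     | false => fun _ => existT _ j.+1 c end) erefl
  end.
Definition ltgt1 (A : gset n) (x : lab A) : lab A :=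
  match x with
  | existT 0 c => existT _ 0 c
  | existT j.+1 c =>
    (match j < n as b return (j < n) = b -> lab A with
     | true => fun H => existT _ j (tgt A H c)
     | false => fun _ => existT _ j.+1 c end) erefl
  end.

Definition etaT (A : gset n) m (a : cell A m) : raw (lab A) :=
  etaR (fun k => iter k (@lsrc1 A)) (fun k => iter k (@ltgt1 A)) m (existT _ m a).

Definition T1 := Tg (one n).

Record operad := Operad {
  oK : gset n;
  ok : gmap oK T1;
  oeta : gmap (one n) oK;
  omu : gmap (pb ok (Tbang oK)) oK;
  oeta_coll : forall m, m <= n ->
    sval (gfun ok (gfun oeta (m := m) tt)) = etaT (A := one n) (m := m) tt;
  omu_coll : forall m, m <= n -> forall x : cell (pb ok (Tbang oK)) m,
    sval (gfun ok (gfun omu x)) =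
    flatR m (mapR (fun y : lab oK => sval (gfun ok (projT2 y))) (sval (sval x).2));
  ounit_l : forall m, m <= n -> forall (c : cell oK m) (x : cell (pb ok (Tbang oK)) m),
    (sval x).1 = gfun oeta (m := m) tt -> sval (sval x).2 = etaT c ->
    gfun omu x = c;
  ounit_r : forall m, m <= n -> forall (a : cell oK m) (x : cell (pb ok (Tbang oK)) m),
    (sval x).1 = a ->
    sval (sval x).2 = mapR (fun y : lab (one n) => existT _ (projT1 y) (gfun oeta (projT2 y)))
                           (sval (gfun ok a)) ->
    gfun omu x = a;
  oassoc : forall m, m <= n -> forall (a : cell oK m)
    (S : cell (Tg (pb ok (Tbang oK))) m) (x y z : cell (pb ok (Tbang oK)) m),
    (sval x).1 = a ->
    sval (sval x).2 = mapR (fun q : lab (pb ok (Tbang oK)) =>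
                              existT _ (projT1 q) (sval (projT2 q)).1) (sval S) ->
    (sval y).1 = gfun omu x ->
    sval (sval y).2 = flatR m (mapR (fun q : lab (pb ok (Tbang oK)) =>
                                      sval (sval (projT2 q)).2) (sval S)) ->
    (sval z).1 = a ->
    sval (sval z).2 = mapR (fun q : lab (pb ok (Tbang oK)) =>
                              existT _ (projT1 q) (gfun omu (projT2 q))) (sval S) ->
    gfun omu y = gfun omu z
}.

Definition par (G : gset n) m : cell G m -> cell G m -> Prop :=
  match m with
  | 0 => fun _ _ => True
  | j.+1 => fun a b => forall H : j < n, src G H a = src G H b /\ tgt G H a = tgt G H b
  end.

Definition idT (A : gset n) j (x : cell (Tg A) j) : cell (Tg A) j.+1 :=
  exist _ (sval x) (wf_S (proj2_sig x)).

Section Contraction.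
Variable O : operad.

Definition Kfib m (x : cell T1 m) := {a : cell (oK O) m | gfun (ok O) a = x}.

Definition CK j (H : j < n) (p : cell T1 j.+1) :=
  {ab : Kfib (src T1 H p) * Kfib (tgt T1 H p) | par (sval ab.1) (sval ab.2)}.

Record contraction := Contraction {
  gam : forall j (H : j < n) (a : cell T1 j), CK H (idT a) -> Kfib (idT a);
  gam_src : forall j (H : j < n) (a : cell T1 j) (pq : CK H (idT a)),
    src (oK O) H (sval (gam pq)) = sval (sval pq).1;
  gam_tgt : forall j (H : j < n) (a : cell T1 j) (pq : CK H (idT a)),
    tgt (oK O) H (sval (gam pq)) = sval (sval pq).2;
  tame : forall a b : cell (oK O) n, par a b -> gfun (ok O) a = gfun (ok O) b -> a = b
}.

(* the monad induced by the operad *)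
Definition KA (A : gset n) : gset n := pb (Tbang A) (ok O).

Definition muK_rel (A : gset n) m (w : cell (KA (KA A)) m) (z : cell (KA A) m) : Prop :=
  sval (sval z).1 =
    flatR m (mapR (fun q : lab (KA A) => sval (sval (projT2 q)).1) (sval (sval w).1)) /\
  exists y : cell (pb (ok O) (Tbang (oK O))) m,
    (sval y).1 = (sval w).2 /\
    sval (sval y).2 = mapR (fun q : lab (KA A) => existT _ (projT1 q) (sval (projT2 q)).2)
                           (sval (sval w).1) /\
    (sval z).2 = gfun (omu O) y.

Definition constraint (g : contraction) (X : gset n) m : cell (KA X) m -> Prop :=
  match m with
  | 0 => fun _ => False
  | j.+1 => fun z => exists (H : j < n) (p : cell (Tg (KA X)) j)
       (pq : CK H (idT (gfun (Tbang (KA X)) p))) (w : cell (KA (KA X)) j.+1),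
       (sval w).1 = idT p /\ (sval w).2 = sval (gam g pq) /\ muK_rel w z
  end.
End Contraction.
End Operads.

From Stdlib Require List.
From mathcomp Require Import all_boot.
Set Implicit Arguments. Unset Strict Implicit. Unset Printing Implicit Defensive.

(* A constraint n-cell of the free algebra is the composite, under mu^K, of an
   identity cell id_pi of T(KX) labelled by a contraction cell. Flattening an
   identity produces a pasting diagram of depth at most n-1, i.e. again an
   identity, so the T-component of a constraint n-cell coincides with its own
   source; for parallel constraint cells these components therefore agree. The
   K-components are then parallel n-cells over the same cell of T1, and
   tameness of the contraction makes them equal. *)

Section Depth.
Variable L : Type.

Fixpoint depth_le (k : nat) (r : raw L) : Prop :=
  match k, r with
  | 0, Raw _ l => l = [::]
  | k'.+1, Raw _ l => forall q, List.In q l -> depth_le k' q.1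
  end.

Lemma chainP_In W (Y : L -> Prop) p l :
  chainP W Y p l -> forall q, List.In q l -> exists pr, W pr q.2 q.1.
Proof.
elim: l p => [|[s y] l IH] p //= [_ [Hs Hc]] q [<-|Hq]; first by exists p.
exact: IH Hc q Hq.
Qed.

Lemma wf_depth_le Lok (r : raw L) d m b : wf Lok d m b r -> depth_le m r.
Proof.
elim/(@raw_ind' L): r d m b => x l IH d [|m] b [_ [Hl Hc]] /=; first exact: Hl.
by move=> q Hq; have [pr Hw] := chainP_In Hc Hq; exact: IH Hw.
Qed.

Lemma srcR_id (r : raw L) k : depth_le k r -> srcR k r = r.
Proof.
elim/(@raw_ind' L): r k => x l IH [|k] /=; first by move->.
move=> Hl; congr Raw; rewrite -[RHS]map_id; apply: List.map_ext_in => -[s y] Hq /=.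
by rewrite (IH (s, y)) //; exact: Hl.
Qed.

End Depth.

Lemma depth_le_mapR (L L' : Type) (f : L -> L') (r : raw L) k :
  depth_le k r -> depth_le k (mapR f r).
Proof.
elim/(@raw_ind' L): r k => x l IH [|k] /=; first by move->.
by move=> Hl _ /List.in_map_iff [q [<- Hq]]; exact: IH (Hl q Hq).
Qed.

Lemma depth_le_projR (L : Type) j (r : raw (raw L)) k :
  depth_le k r -> depth_le k (projR j r).
Proof.
elim/(@raw_ind' (raw L)): r k => x l IH [|k] /=; first by move->.
by move=> Hl _ /List.in_map_iff [q [<- Hq]]; exact: IH (Hl q Hq).
Qed.

Lemma depth_le_flatR (L : Type) k (S : raw (raw L)) :
  depth_le k S -> depth_le k (flatR k.+1 S).
Proof.
elim: k S => [|k IH] [Y l] /=; first by move->.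
move=> Hl q /List.in_concat [s [/List.in_map_iff [p [<- Hp]]]].
move=> /List.in_map_iff [j [<- _]] /=.
exact/IH/depth_le_projR/Hl.
Qed.

Lemma Tcell_eq_of_src n (A : gset n) m (H : m < n) (x y : cell (Tg A) m.+1) :
  depth_le m (sval x) -> depth_le m (sval y) -> src _ H x = src _ H y -> x = y.
Proof.
move=> Dx Dy /(f_equal sval) /= Exy.
by apply: sig_eq; rewrite -(srcR_id Dx) -(srcR_id Dy).
Qed.

Lemma constraint_depth_le n (O : operad n) (g : contraction O) (X : gset n) m
  (z : cell (KA O X) m.+1) : constraint g z -> depth_le m (sval (sval z).1).
Proof.
move=> [H [p [pq [w [Ew1 [_ [-> _]]]]]]]; rewrite Ew1 /=.
exact/depth_le_flatR/depth_le_mapR/(wf_depth_le (proj2_sig p)).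
Qed.

Lemma KA_cell_eq n (O : operad n) (X : gset n) m (z z' : cell (KA O X) m) :
  (sval z).1 = (sval z').1 -> (sval z).2 = (sval z').2 -> z = z'.
Proof.
by move=> E1 E2; apply: sig_eq; move: E1 E2; case: (sval z); case: (sval z') => ? ? ? ? /= -> ->.
Qed.

Theorem mainTheorem11 (n : nat) (O : operad n) (g : contraction O) (X : gset n)
  (z z' : cell (KA O X) n) :
  constraint g z -> constraint g z' -> par z z' -> z = z'.
Proof.
case: n O g X z z' => [|m] O g X z z' Hz; first by case: Hz.
move=> Hz' Hpar; have Hm : m < m.+1 by [].
have [Hs Ht] := Hpar Hm.
have E1 : (sval z).1 = (sval z').1.
  apply: (Tcell_eq_of_src (H := Hm) (constraint_depth_le Hz) (constraint_depth_le Hz')).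
  by move: (f_equal (fun u => (sval u).1) Hs).
apply: (KA_cell_eq E1); apply: (tame g).
  move=> H; rewrite (bool_irrelevance H Hm).
  by split; [move: (f_equal (fun u => (sval u).2) Hs) | move: (f_equal (fun u => (sval u).2) Ht)].
by rewrite -(proj2_sig z) -(proj2_sig z') E1.
Qed.
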